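(* Let $a=\{a_1,\dots,a_m\}$ be a set of positive integers and $n\ge 0$. Then there exist a polynomial $P(k)\in\mathbb{Q}[k]$ of degree $n$ and an integer $N$ such that for every integer $k\ge N$ the number of $n$-element independent sets of $F(a,k)$ equals $P(k)$.
   Context: For a set $a=\{a_1,\dots,a_m\}$ of positive integers and a positive integer $k$, $F(a,k)$ is the simple graph with vertex set $\mathbb{Z}/k\mathbb{Z}$ in which distinct vertices $i,j$ are adjacent if and only if $i-j\equiv a_r\pmod k$ or $j-i\equiv a_r\pmod k$ for some $1\le r\le m$. An independent set is a set of vertices no two of which are adjacent. *)

From HB Require Import structures.
From mathcomp Require Import all_boot all_order all_algebra.
Set Implicit Arguments. Unset Strict Implicit. Unset Printing Implicit Defensive.

(* Vertices of F(a,k) are the residues Z/kZ, represented by 'I_k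
   (residue i <-> i in {0,...,k-1}).  For i j : 'I_k, the residue of
   i - j mod k is (i + k - j) %% k, and "i - j = a_r (mod k)" means
   (i + (k - j)) = a_r %[mod k]. *)
Definition Fadj (a : seq nat) (k : nat) (i j : 'I_k) : bool :=
  (i != j) &&
  has (fun ar => ((i + (k - j)) %% k == ar %% k) ||
                 ((j + (k - i)) %% k == ar %% k)) a.

Definition Findep (a : seq nat) (k : nat) (S : {set 'I_k}) : bool :=
  [forall i in S, forall j in S, ~~ Fadj a i j].

Definition num_indep (a : seq nat) (k n : nat) : nat :=
  #|[set S : {set 'I_k} | (#|S| == n) && Findep a S]|.

(* Decide the vertices 0, 1, 2, ... of Z/kZ one at a time.  The undecided
   vertices always form an arc of the cycle, and all that the decisions made so
   far retain is a finite set of forbidden distances from either end of the arc,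
   together with the length of the decided part, which only matters through
   wrap-around distances not exceeding max a.  Let f(l) count the m-subsets of
   such an arc of length l.  Deciding the first vertex gives
   f(l+1) = f'(l) + [vertex allowed] g(l), where f' is of the same kind with the
   left constraints shifted and g counts (m-1)-subsets.  After finitely many
   shifts the left constraints are exhausted and the wrap-around is out of
   reach, so that f' = f and f(l+1) = f(l) + g(l).  By induction on m, g is
   eventually a polynomial of degree m-1, hence f is eventually a polynomial of
   degree m, since a discrete antiderivative raises the degree by exactly one. *)

From HB Require Import structures.
From mathcomp Require Import all_boot all_order all_algebra.
From mathcomp Require Import zify.
Set Implicit Arguments. Unset Strict Implicit. Unset Printing Implicit Defensive.
Import Order.TTheory GRing.Theory Num.Theory.

Lemma forall_in_imset (T1 T2 : finType) (f : T1 -> T2) (A : {set T1}) (P : pred T2) :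
  [forall y in f @: A, P y] = [forall x in A, P (f x)].
Proof.
apply/forall_inP/forall_inP => [H x xA | H _ /imsetP[x xA ->]]; last exact: H.
by apply: H; apply: imset_f.
Qed.

Lemma forall_in_setU1 (T : finType) (x : T) (A : {set T}) (P : pred T) :
  [forall y in x |: A, P y] = P x && [forall y in A, P y].
Proof.
apply/forall_inP/andP => [H | [Px /forall_inP H] y].
  by split; [apply: H; rewrite setU11 | apply/forall_inP => y yA; apply: H; rewrite setU1r].
by rewrite in_setU1 => /predU1P[-> | /H].
Qed.

Lemma card_setI_codom_inj (T1 T2 : finType) (g : T1 -> T2) (A B : {set T2}) :
  injective g -> (forall x, g x \in A) -> (forall y, y \in A -> exists x, y = g x) ->
  #|B :&: A| = #|g @^-1: B|.
Proof.
move=> g_inj gA Aim; rewrite -(card_imset _ g_inj); apply: eq_card => y.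
rewrite inE; apply/andP/imsetP => [[By /Aim[x yE]] | [x]]; last by rewrite inE => Bgx ->.
by exists x; rewrite // inE -yE.
Qed.

Lemma ord0_notin_imset_lift l (X : {set 'I_l}) : ord0 \notin lift ord0 @: X.
Proof. by apply/imsetP => -[x _ /eqP]; rewrite (negbTE (neq_lift _ _)). Qed.

Lemma imset_lift0_preimset l (S : {set 'I_l.+1}) :
  lift ord0 @: (lift ord0 @^-1: S) = S :\ ord0.
Proof.
apply/setP => y; rewrite !inE; case: (unliftP ord0 y) => [x ->|->].
  by rewrite mem_imset ?inE ?neq_lift //; exact: lift_inj.
by rewrite eqxx (negbTE (ord0_notin_imset_lift _)).
Qed.

Lemma forall_in_andb (T : finType) (A : {pred T}) (P Q : pred T) :
  [forall x in A, P x && Q x] = [forall x in A, P x] && [forall x in A, Q x].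
Proof.
apply/forall_inP/andP => [H | [/forall_inP HP /forall_inP HQ] x xA].
  by split; apply/forall_inP => x /H/andP[].
by rewrite HP ?HQ.
Qed.

Section ArcCount.
Variable a : seq nat.

(* The vertices 0, ..., l-1 of [X] lie on an arc of a cycle of length l + j.
   No vertex of [X] may be at a distance in [F] from the left end of the arc or
   in [G] from its right end, and no two vertices of [X] may be at a distance
   in [a] in either direction around the cycle. *)
Definition arc_indep l j (F G : pred nat) (X : {set 'I_l}) : bool :=
  [forall x in X, ~~ F x && ~~ G (l.-1 - x)] &&
  [forall x in X, forall y in X,
     (x < y) ==> (y - x \notin a) && (x + (l + j) - y \notin a)].

Definition arc_count l m j F G :=
  #|[set X : {set 'I_l} | (#|X| == m) && arc_indep j F G X]|.

Lemma arc_count0 l j F G : arc_count l 0 j F G = 1.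
Proof.
rewrite /arc_count -(cards1 (set0 : {set 'I_l})); apply: eq_card => X; rewrite !inE.
apply/andP/eqP => [[/eqP/cards0_eq] // | ->]; rewrite cards0.
by split=> //; apply/andP; split; apply/forall_inP => x; rewrite inE.
Qed.

Lemma arc_indep_lift l j F G (X : {set 'I_l}) :
  arc_indep j F G (lift ord0 @: X) = arc_indep j.+1 (fun p => F p.+1) G X.
Proof.
rewrite /arc_indep !forall_in_imset; congr (_ && _).
  by apply: eq_forallb => x; rewrite lift0 /=; have -> : l - x.+1 = l.-1 - x by lia.
apply: eq_forallb => x; rewrite forall_in_imset; congr (_ ==> _).
apply: eq_forallb => y; rewrite !lift0 ltnS subSS.
by have -> : x.+1 + (l.+1 + j) - y.+1 = x + (l + j.+1) - y by lia.
Qed.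

Lemma arc_indep_cons l j F G (X : {set 'I_l}) :
  arc_indep j F G (ord0 |: lift ord0 @: X) =
  [&& ~~ F 0, ~~ G l &
      arc_indep j.+1 (fun p => F p.+1 || (p.+1 \in a))
                     (fun e => G e || (j + e.+1 \in a)) X].
Proof.
rewrite /arc_indep !(forall_in_setU1, forall_in_imset) subn0.
have -> : [forall x in X, forall y in ord0 |: lift ord0 @: X,
            (lift ord0 x < y) ==> (y - lift ord0 x \notin a) &&
                                  (lift ord0 x + (l.+1 + j) - y \notin a)] =
          [forall x in X, forall y in X,
            (x < y) ==> (y - x \notin a) && (x + (l + j.+1) - y \notin a)].
  apply: eq_forallb => x; rewrite forall_in_setU1 forall_in_imset /= /bump leq0n.
  congr (_ ==> _); apply: eq_forallb => y; rewrite leq0n ltnS subSS.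
  by have -> : x.+1 + (l.+1 + j) - y.+1 = x + (l + j.+1) - y by lia.
have -> : [forall x in X, ~~ (F x.+1 || (x.+1 \in a)) &&
                          ~~ (G (l.-1 - x) || (j + (l.-1 - x).+1 \in a))] =
          [forall x in X, ~~ F x.+1 && ~~ G (l - x.+1)] &&
          [forall x in X, (x.+1 \notin a) && (j + (l - x.+1).+1 \notin a)].
  rewrite -forall_in_andb; apply: eq_forallb => x.
  have -> : l - x.+1 = l.-1 - x by lia.
  by rewrite !negb_or; case: (F _); case: (G _); case: (_ \in a); case: (_ \in a).
have -> : [forall x in X, ~~ F (lift ord0 x) && ~~ G (l - lift ord0 x)] =
          [forall x in X, ~~ F x.+1 && ~~ G (l - x.+1)] by [].
have -> : [forall x in X, (lift ord0 x - 0 \notin a) &&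
                          (0 + (l.+1 + j) - lift ord0 x \notin a)] =
          [forall x in X, (x.+1 \notin a) && (j + (l - x.+1).+1 \notin a)].
  apply: eq_forallb => x; have := ltn_ord x; rewrite lift0 subn0 add0n => xl.
  by have -> : l.+1 + j - x.+1 = j + (l - x.+1).+1 by lia.
by rewrite /= !andbA.
Qed.

Lemma arc_count_rec l m j F G :
  arc_count l.+1 m.+1 j F G =
  arc_count l m.+1 j.+1 (fun p => F p.+1) G +
  (~~ F 0 && ~~ G l) *
    arc_count l m j.+1 (fun p => F p.+1 || (p.+1 \in a))
                       (fun e => G e || (j + e.+1 \in a)).
Proof.
have lift_inj0 := @lift_inj l.+1 ord0.
rewrite /arc_count -(cardsID [set S : {set 'I_l.+1} | ord0 \in S]) addnC; congr (_ + _).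
  rewrite setDE (card_setI_codom_inj _ (imset_inj lift_inj0)); last first.
  - move=> S; rewrite !inE => S0; exists (lift ord0 @^-1: S).
    rewrite imset_lift0_preimset; apply/setP => y; rewrite !inE.
    by case: eqP => // ->; rewrite (negbTE S0).
  - by move=> X; rewrite !inE ord0_notin_imset_lift.
  by apply: eq_card => X; rewrite !inE card_imset // arc_indep_lift.
have cons_inj : injective (fun X : {set 'I_l} => ord0 |: lift ord0 @: X).
  move=> X Y /(congr1 (fun S => S :\ ord0)).
  by rewrite !setU1K ?ord0_notin_imset_lift // => /(imset_inj lift_inj0).
rewrite (card_setI_codom_inj _ cons_inj); last first.
- move=> S; rewrite !inE => S0; exists (lift ord0 @^-1: S).
  by rewrite imset_lift0_preimset setD1K.
- by move=> X; rewrite inE setU11.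
have [b_ok|b_ko] := boolP (~~ F 0 && ~~ G l); rewrite ?mul1n ?mul0n.
  apply: eq_card => X.
  rewrite !inE cardsU1 ord0_notin_imset_lift card_imset // arc_indep_cons.
  by case/andP: b_ok => -> ->; rewrite add1n eqSS.
apply: eq_card0 => X; rewrite !inE arc_indep_cons.
by case: (F 0) b_ko; case: (G l); rewrite ?andbF.
Qed.

Lemma eq_arc_count l m j F F' G : F =1 F' -> arc_count l m j F G = arc_count l m j F' G.
Proof.
move=> eqF; apply: eq_card => X; rewrite !inE /arc_indep.
by congr [&& _, _ & _]; apply: eq_forallb => x; rewrite eqF.
Qed.

Lemma arc_count_far_wrap l m j j' F G :
  {in a, forall z, z <= j} -> {in a, forall z, z <= j'} ->
  arc_count l m j F G = arc_count l m j' F G.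
Proof.
move=> aj aj'; apply: eq_card => X; rewrite !inE /arc_indep.
congr [&& _, _ & _]; apply: eq_forallb => x; congr (_ ==> _).
apply: eq_forallb => y; have := ltn_ord y => yl.
have far k : {in a, forall z, z <= k} -> (x + (l + k) - y \in a) = false.
  by move=> ak; apply/negP => /ak; lia.
by rewrite !far.
Qed.
End ArcCount.

Lemma forall_in_pairs_lt k (S : {set 'I_k}) (r : rel 'I_k) :
  symmetric r -> irreflexive r ->
  [forall x in S, forall y in S, ~~ r x y] =
  [forall x in S, forall y in S, (x < y) ==> ~~ r x y].
Proof.
move=> r_sym r_irr; apply/forall_inP/forall_inP => H x xS; apply/forall_inP => y yS.
  by apply/implyP => _; exact: (forall_inP (H x xS)).
case: (ltngtP x y) => [xy|yx|/val_inj->]; last by rewrite r_irr.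
  exact: (implyP (forall_inP (H x xS) y yS)).
by rewrite r_sym; exact: (implyP (forall_inP (H y yS) x xS)).
Qed.

Lemma Fadj_sym a k : symmetric (@Fadj a k).
Proof.
move=> i j; rewrite /Fadj eq_sym; congr (_ && _).
by apply: eq_has => z; exact: orbC.
Qed.

Lemma Fadj_irr a k : irreflexive (@Fadj a k).
Proof. by move=> i; rewrite /Fadj eqxx. Qed.

Lemma Fadj_lt a k (x y : 'I_k) : {in a, forall z, z < k} -> x < y ->
  Fadj a x y = (y - x \in a) || (x + k - y \in a).
Proof.
move=> ak xy; have yk := ltn_ord y.
have wrap : (x + (k - y)) %% k = x + k - y by rewrite modn_small; lia.
have diff : (y + (k - x)) %% k = y - x.
  by rewrite (_ : y + (k - x) = y - x + k) ?modnDr ?modn_small; lia.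
rewrite /Fadj neq_ltn xy wrap diff /=.
rewrite (@eq_in_has _ _ (predU (pred1 (x + k - y)) (pred1 (y - x)))); last first.
  by move=> z /ak zk; rewrite /= modn_small // ![_ == z]eq_sym.
by rewrite has_predU !has_pred1 orbC.
Qed.

Lemma num_indep_arc_count a k n : {in a, forall z, z < k} ->
  num_indep a k n = arc_count a k n 0 pred0 pred0.
Proof.
move=> ak; apply: eq_card => S; rewrite !inE /Findep /arc_indep.
rewrite forall_in_pairs_lt; [|exact: Fadj_sym|exact: Fadj_irr].
have -> : [forall x in S, ~~ pred0 x && ~~ pred0 (k.-1 - x)] by apply/forall_inP.
congr (_ && _); apply: eq_forallb => x; congr (_ ==> _).
apply: eq_forallb => y.
by case: (ltnP x y) => // xy; rewrite Fadj_lt // addn0 negb_or.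
Qed.

Section DiscreteAntiderivative.
Local Open Scope ring_scope.

Lemma size_XaddC1_expS_sub (R : nzRingType) d :
  (size (('X + 1) ^+ d.+1 - 'X^(d.+1) - (d.+1)%:R *: 'X^d : {poly R})%R <= d)%N.
Proof.
rewrite exprD1n big_ord_recr /= binn mulr1n addrK big_ord_recr /= binSn.
rewrite scaler_nat addrK.
rewrite (eq_bigr (fun i : 'I_d => 'C(d.+1, i)%:R *: 'X^i)) => [|i _]; last first.
  by rewrite scaler_nat.
by rewrite -(poly_def d (fun i => 'C(d.+1, i)%:R)) size_poly.
Qed.

Lemma size_sub_lead_coef (R : nzRingType) (p : {poly R}) d :
  size p = d.+1 -> (size (p - lead_coef p *: 'X^d)%R <= d)%N.
Proof.
move=> sp; apply/leq_sizeP => i di; rewrite coefB coefZ coefXn.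
case: eqP => [->|nid]; first by rewrite mulr1 lead_coefE sp subrr.
by rewrite mulr0 subr0 nth_default // sp; lia.
Qed.

Lemma discrete_antiderivative (R : numFieldType) (H : {poly R}) :
  exists2 S : {poly R}, (forall x, S.[x + 1] - S.[x] = H.[x]) &
    size S = if H == 0 then 0%N else (size H).+1.
Proof.
move: {2}(size H) (leqnn (size H)) => d; elim: d H => [|d IH] H sH.
  move: sH; rewrite size_poly_leq0 => /eqP ->.
  by exists 0; rewrite ?eqxx ?size_poly0 // => x; rewrite !horner0 subrr.
case: (ltnP (size H) d.+1) => [/IH //|dH].
have sHd : size H = d.+1 by apply/eqP; rewrite eqn_leq sH.
have H0 : H != 0 by rewrite -size_poly_eq0 sHd.
pose c := lead_coef H; pose k := c / d.+1%:R.
pose D : {poly R} := ('X + 1) ^+ d.+1 - 'X^(d.+1).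
have k0 : k != 0 by rewrite mulf_neq0 ?invr_eq0 ?pnatr_eq0 ?lead_coef_eq0.
have sHD : (size (H - k *: D)%R <= d)%N.
  have -> : H - k *: D = (H - c *: 'X^d) - k *: (D - d.+1%:R *: 'X^d).
    by rewrite [in RHS]scalerBr scalerA divfK ?pnatr_eq0 // opprB addrA subrK.
  apply: leq_trans (size_polyD _ _) _; rewrite size_polyN geq_max.
  rewrite size_sub_lead_coef //=.
  exact: leq_trans (size_scale_leq _ _) (size_XaddC1_expS_sub _ _).
have [S' dS' sS'] := IH _ sHD.
exists (k *: 'X^(d.+1) + S') => [x|].
  have dT : (k *: 'X^(d.+1)).[x + 1] - (k *: 'X^(d.+1)).[x] = (k *: D).[x].
    by rewrite !hornerE mulrBr.
  by rewrite !hornerD opprD addrACA dT dS' hornerD hornerN addrC subrK.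
have sT : size (k *: 'X^(d.+1) : {poly R}) = d.+2 by rewrite size_scale ?size_polyXn.
rewrite (negbTE H0) sHd size_polyDl sT // sS'.
by case: (_ == 0) => //; apply: leq_ltn_trans sHD _.
Qed.

End DiscreteAntiderivative.

Section EventuallyPolynomial.
Local Open Scope ring_scope.

Definition eventually_polynomial (d : nat) (f : nat -> nat) : Prop :=
  exists (P : {poly rat}) (N : nat),
    size P = d.+1 /\ forall l, (N <= l)%N -> (f l)%:R = P.[l%:R].

Lemma eventually_polynomial_succ d N (f g : nat -> nat) :
  (forall l, (N <= l)%N -> f l.+1 = g l) ->
  eventually_polynomial d g -> eventually_polynomial d f.
Proof.
move=> fg [P [M [sP gP]]]; exists (P \Po ('X - 1)), (maxn N M).+1.
split; first by rewrite size_comp_poly2 ?size_XsubC.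
case=> // l; rewrite ltnS geq_max => /andP[Nl Ml].
by rewrite fg // gP // horner_comp hornerXsubC -natr1 addrK.
Qed.

Lemma eventually_polynomial_add_lower d e c (f g : nat -> nat) : (e < d)%N ->
  eventually_polynomial d f -> eventually_polynomial e g ->
  eventually_polynomial d (fun l => f l + c * g l)%N.
Proof.
move=> ed [P [M [sP fP]]] [Q [M' [sQ gQ]]]; exists (P + c%:R *: Q), (maxn M M').
have sQP : (size (c%:R *: Q) < size P)%N.
  by rewrite (leq_ltn_trans (size_scale_leq _ _)) // sP sQ.
split; first by rewrite size_polyDl.
move=> l; rewrite geq_max => /andP[Ml M'l].
by rewrite natrD natrM fP // gQ // hornerD hornerZ.
Qed.

Lemma eventually_polynomial_sum d N (f h : nat -> nat) :
  (forall l, (N <= l)%N -> f l.+1 = f l + h l)%N ->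
  eventually_polynomial d h -> eventually_polynomial d.+1 f.
Proof.
move=> fh [H [M [sH hH]]].
have [S dS] := discrete_antiderivative H.
have H0 : H != 0 by rewrite -size_poly_eq0 sH.
rewrite (negbTE H0) sH => sS.
pose L := maxn N M; pose K := (f L)%:R - S.[L%:R].
exists (S + K%:P), L; split; first by rewrite size_polyDl ?sS // size_polyC; case: (K != 0).
move=> l /subnKC <-; elim: (l - L)%N => [|t IHt].
  by rewrite addn0 hornerD hornerC subrKC.
have [NLt MLt] : (N <= L + t)%N /\ (M <= L + t)%N by rewrite /L; lia.
rewrite addnS fh // natrD IHt hH //.
by rewrite -dS -natr1 !hornerD !hornerC addrC addrA subrK.
Qed.

End EventuallyPolynomial.

Section Polynomiality.
Variables (a : seq nat) (M : nat).
Hypothesis aM : {in a, forall z, z < M}.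

Section DegreeStep.
Variable m : nat.
Hypothesis IHm : forall (F G : pred nat) j bF bG,
  (forall p, F p -> p < bF) -> (forall p, G p -> p < bG) ->
  eventually_polynomial m (fun l => arc_count a l m j F G).

Lemma arc_count_cons_polynomial (F G : pred nat) j bF bG :
  (forall p, F p -> p < bF) -> (forall p, G p -> p < bG) ->
  eventually_polynomial m (fun l => arc_count a l m j.+1
    (fun p => F p.+1 || (p.+1 \in a)) (fun e => G e || (j + e.+1 \in a))).
Proof.
move=> hF hG; apply: (@IHm _ _ _ (bF + M) (bG + M)) => p /orP[];
  [move/hF | move/aM | move/hG | move/aM]; lia.
Qed.

Lemma arc_count_succ_polynomial_far (F G : pred nat) j bG :
  (forall p, ~~ F p) -> M <= j -> (forall p, G p -> p < bG) ->
  eventually_polynomial m.+1 (fun l => arc_count a l m.+1 j F G).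
Proof.
move=> hF Mj hG.
have hF0 p : F p -> p < 0 by rewrite (negbTE (hF p)).
apply: (@eventually_polynomial_sum _ bG _ _ _ (arc_count_cons_polynomial j hF0 hG)).
move=> l bGl; have Gl : G l = false by apply/negP => /hG; lia.
rewrite arc_count_rec (negbTE (hF 0)) Gl mul1n; congr (_ + _).
rewrite (@eq_arc_count _ _ _ _ _ F) => [|p]; last by rewrite !(negbTE (hF _)).
by apply: arc_count_far_wrap => z /aM; lia.
Qed.

Lemma arc_count_succ_polynomial (F G : pred nat) j t bG :
  (forall p, F p -> p < t) -> M <= j + t -> (forall p, G p -> p < bG) ->
  eventually_polynomial m.+1 (fun l => arc_count a l m.+1 j F G).
Proof.
move=> + + hG; elim: t F j => [|t IHt] F j hF jt.
  by apply: arc_count_succ_polynomial_far hG => [p|]; [apply/negP => /hF | lia].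
have hF' p : F p.+1 -> p < t by move/hF.
have jt' : M <= j.+1 + t by lia.
apply: (eventually_polynomial_succ (N := bG) _ (eventually_polynomial_add_lower (~~ F 0)
          (ltnSn m) (IHt _ _ hF' jt') (arc_count_cons_polynomial j hF hG))).
move=> l bGl; have Gl : G l = false by apply/negP => /hG; lia.
by rewrite arc_count_rec Gl andbT.
Qed.

End DegreeStep.

Lemma arc_count_eventually_polynomial m (F G : pred nat) j bF bG :
  (forall p, F p -> p < bF) -> (forall p, G p -> p < bG) ->
  eventually_polynomial m (fun l => arc_count a l m j F G).
Proof.
elim: m F G j bF bG => [|m IHm] F G j bF bG hF hG.
  by exists 1%R, 0; split=> [|l _]; rewrite ?size_poly1 // arc_count0 hornerC.
by apply: (arc_count_succ_polynomial IHm (t := bF + M)) hG => [p /hF|]; lia.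
Qed.

End Polynomiality.

Local Open Scope ring_scope.

Theorem lemma3p3 (a : seq nat) (n : nat) :
  uniq a -> (forall x, x \in a -> (0 < x)%N) ->
  exists (P : {poly rat}) (N : nat),
    size P = n.+1 /\
    forall k : nat, (N <= k)%N -> (num_indep a k n)%:R = P.[k%:R].
Proof.
move=> _ _.
pose M := (\max_(z <- a) z).+1.
have aM : {in a, forall z, (z < M)%N} by move=> z za; rewrite ltnS; exact: leq_bigmax_seq.
have [P [N [sP eP]]] := @arc_count_eventually_polynomial a M aM n pred0 pred0 0 0 0
  (fun _ => id) (fun _ => id).
exists P, (maxn N M); split=> // k; rewrite geq_max => /andP[Nk Mk].
by rewrite num_indep_arc_count ?eP // => z /aM; lia.
Qed.
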